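(* Let $\mathcal{R}$ be a finite family of axis-parallel rectangles in general position in which every pair of intersecting rectangles has a corner intersection. Then $\mathrm{tw}(G_{\mathcal{R}})\le 2\cdot\mathrm{tw}(A_{\mathcal{R}})+1$.
   Context: Rectangles are closed axis-parallel rectangles $X\times Y$; general position means all specifying intervals have pairwise distinct endpoints. Two intersecting rectangles have a corner intersection if one contains one or two corners of the other but neither contains the other. $G_{\mathcal{R}}$ is the intersection graph (vertices $\mathcal{R}$, edges between distinct intersecting rectangles). A joint is a point where the boundaries of two distinct rectangles intersect; the arrangement graph $A_{\mathcal{R}}$ has the joints as vertices, and $\{u,v\}$ is an edge iff $u,v$ are joints on the boundary of some rectangle with no other joint on that boundary between them. $\mathrm{tw}$ denotes treewidth: the minimum over tree decompositions (a tree whose nodes are vertex subsets covering all vertices and edges, with the nodes containing any fixed vertex forming a connected subtree) of the maximum node size minus one. *)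

From mathcomp Require Import all_boot all_order all_algebra.
From mathcomp Require Import reals.
Set Implicit Arguments. Unset Strict Implicit. Unset Printing Implicit Defensive.
Import Order.TTheory GRing.Theory Num.Theory.
Local Open Scope ring_scope.

Record rect (R : realType) := Rect { xl : R; xr : R; yb : R; yt : R }.

Definition rect_wf (R : realType) (r : rect R) : Prop :=
  xl r <= xr r /\ yb r <= yt r.

Definition in_rect (R : realType) (r : rect R) (p : R * R) : bool :=
  (xl r <= p.1 <= xr r) && (yb r <= p.2 <= yt r).

Definition on_bd (R : realType) (r : rect R) (p : R * R) : bool :=
  in_rect r p && [|| p.1 == xl r, p.1 == xr r, p.2 == yb r | p.2 == yt r].

Definition corners (R : realType) (r : rect R) : seq (R * R) :=
  [:: (xl r, yb r); (xr r, yb r); (xr r, yt r); (xl r, yt r)].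

Definition rects_meet (R : realType) (r s : rect R) : Prop :=
  exists p, in_rect r p && in_rect s p.

Definition rect_contains (R : realType) (r s : rect R) : Prop :=
  forall p, in_rect s p -> in_rect r p.

Definition corner_inter (R : realType) (r s : rect R) : Prop :=
  [/\ rects_meet r s, ~ rect_contains r s, ~ rect_contains s r &
      (count (in_rect r) (corners s) \in [:: 1%N; 2%N]) \/
      (count (in_rect s) (corners r) \in [:: 1%N; 2%N])].

Definition xends (R : realType) (r : rect R) : seq R := [:: xl r; xr r].
Definition yends (R : realType) (r : rect R) : seq R := [:: yb r; yt r].

Definition general_position (R : realType) (I : finType) (F : I -> rect R) : Prop :=
  (forall i, xl (F i) != xr (F i) /\ yb (F i) != yt (F i)) /\
  (forall i j, i != j ->
     (forall a b, a \in xends (F i) -> b \in xends (F j) -> a != b) /\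
     (forall a b, a \in yends (F i) -> b \in yends (F j) -> a != b)).

Definition is_tree (T : finType) (te : rel T) : Prop :=
  [/\ (exists t : T, True), symmetric te, irreflexive te,
      (forall s t, connect te s t) &
      (forall (x : T) (p : seq T), uniq (x :: p) -> (2 <= size p)%N ->
          ~~ cycle te (x :: p))].

Definition is_tree_decomp (V : eqType) (vert : V -> Prop) (adj : V -> V -> Prop)
    (T : finType) (te : rel T) (B : T -> seq V) : Prop :=
  [/\ is_tree te,
      (forall t v, v \in B t -> vert v),
      (forall v, vert v -> exists t, v \in B t),
      (forall u v, adj u v -> exists t, (u \in B t) && (v \in B t)) &
      (forall v s t, v \in B s -> v \in B t ->
          connect [rel a b | [&& te a b, v \in B a & v \in B b]] s t)].

Definition tw_le (V : eqType) (vert : V -> Prop) (adj : V -> V -> Prop) (k : nat) : Prop :=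
  exists (T : finType) (te : rel T) (B : T -> seq V),
    is_tree_decomp vert adj te B /\ (forall t, (size (undup (B t)) <= k.+1)%N).

Definition inter_adj (R : realType) (I : finType) (F : I -> rect R) (i j : I) : Prop :=
  i != j /\ rects_meet (F i) (F j).

Definition joint (R : realType) (I : finType) (F : I -> rect R) (p : R * R) : Prop :=
  exists i j, [/\ i != j, on_bd (F i) p & on_bd (F j) p].

(* counter-clockwise arclength position of a boundary point, starting at the
   bottom-left corner; injective on the boundary, values in [0, perimeter) *)
Definition bd_pos (R : realType) (r : rect R) (p : R * R) : R :=
  let w := xr r - xl r in let h := yt r - yb r in
  if p.2 == yb r then p.1 - xl r
  else if p.1 == xr r then w + (p.2 - yb r)
  else if p.2 == yt r then w + h + (xr r - p.1)
  else w + w + h + (yt r - p.2).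

(* arrangement graph A_R: u, v are distinct joints on the boundary of some
   rectangle, and one of the two boundary arcs between them contains no
   other joint *)
Definition arr_adj (R : realType) (I : finType) (F : I -> rect R) (u v : R * R) : Prop :=
  [/\ joint F u, joint F v, u != v &
    exists i, [/\ on_bd (F i) u, on_bd (F i) v &
      let a := Num.min (bd_pos (F i) u) (bd_pos (F i) v) in
      let b := Num.max (bd_pos (F i) u) (bd_pos (F i) v) in
      (forall w, joint F w -> on_bd (F i) w -> ~ (a < bd_pos (F i) w < b)) \/
      (forall w, joint F w -> on_bd (F i) w -> a <= bd_pos (F i) w <= b)]].

From mathcomp Require Import all_boot all_order all_algebra.
From mathcomp Require Import reals.
Set Implicit Arguments. Unset Strict Implicit. Unset Printing Implicit Defensive.
Import Order.TTheory GRing.Theory Num.Theory.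

(* Replace every joint in a bag of a tree decomposition of A_R by the
   rectangles whose boundary carries it.  In general position a point lies on
   at most two boundaries, so bags at most double: k + 1 joints give at most
   2k + 2 rectangles.  Two rectangles with a corner intersection have crossing
   boundaries, hence share a joint and thus a bag.  The nodes whose bags meet
   the boundary of a rectangle form a subtree: consecutive joints along that
   boundary are adjacent in A_R, so their subtrees are linked.  Rectangles
   with no joint on their boundary meet no other rectangle and get a private
   leaf of the tree. *)

Section RectangleBoundaries.
Local Open Scope ring_scope.
Variable R : realType.
Implicit Types (r s : rect R) (a b : R).

Definition xend_within r s := has (fun a => xl s <= a <= xr s) (xends r).
Definition yend_within r s := has (fun b => yb s <= b <= yt s) (yends r).

Lemma rects_meet_sym r s : rects_meet r s -> rects_meet s r.
Proof. by case=> p /andP[rp sp]; exists p; rewrite rp sp. Qed.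

Lemma xend_withinNlt r s : rects_meet r s -> ~~ xend_within r s ->
  (xl r < xl s) && (xr s < xr r).
Proof.
case=> p /andP[/andP[/andP[r1 r2] _] /andP[/andP[s1 s2] _]].
by rewrite /xend_within /= (le_trans r1 s2) (le_trans s1 r2) !andbT orbF negb_or -!ltNge.
Qed.

Lemma yend_withinNlt r s : rects_meet r s -> ~~ yend_within r s ->
  (yb r < yb s) && (yt s < yt r).
Proof.
case=> p /andP[/andP[_ /andP[r1 r2]] /andP[_ /andP[s1 s2]]].
by rewrite /yend_within /= (le_trans r1 s2) (le_trans s1 r2) !andbT orbF negb_or -!ltNge.
Qed.

Lemma on_bd_cross r s a b : rect_wf r -> rect_wf s ->
  a \in xends r -> xl s <= a <= xr s -> b \in yends s -> yb r <= b <= yt r ->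
  on_bd r (a, b) && on_bd s (a, b).
Proof.
case=> xr_le _ [_ ys_le] ra sa sb rb.
have ra' : xl r <= a <= xr r by move: ra; rewrite !inE => /orP[]/eqP->; rewrite lexx ?andbT.
have sb' : yb s <= b <= yt s by move: sb; rewrite !inE => /orP[]/eqP->; rewrite lexx ?andbT.
rewrite /on_bd /in_rect /= ra' sa sb' rb /=.
by move: ra sb; rewrite !inE => /orP[]-> /orP[]->; rewrite ?orbT.
Qed.

Lemma boundaries_cross r s : rect_wf r -> rect_wf s ->
  xend_within r s -> yend_within s r -> exists p, on_bd r p && on_bd s p.
Proof.
by move=> wr ws /hasP[a ra sa] /hasP[b sb rb]; exists (a, b); apply: on_bd_cross.
Qed.

Lemma boundaries_meet_of_xend r s : rect_wf r -> rect_wf s -> rects_meet r s ->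
  ~ rect_contains s r -> xend_within r s -> exists p, on_bd r p && on_bd s p.
Proof.
move=> wr ws rs nsr xrs; have sr := rects_meet_sym rs.
have [yrs|/(yend_withinNlt sr)/andP[ylt ygt]] := boolP (yend_within s r).
  exact: boundaries_cross.
have [xsr|/(xend_withinNlt sr)/andP[xlt xgt]] := boolP (xend_within s r).
  have ysr : yend_within r s by rewrite /yend_within /= (ltW ylt) (le_trans wr.2 (ltW ygt)).
  by have [p] := boundaries_cross ws wr xsr ysr; exists p; rewrite andbC.
case: nsr => -[q1 q2] /andP[/andP[x1 x2] /andP[y1 y2]].
by rewrite /in_rect /= (le_trans (ltW xlt) x1) (le_trans x2 (ltW xgt))
  (le_trans (ltW ylt) y1) (le_trans y2 (ltW ygt)).
Qed.

Lemma boundaries_meet r s : rect_wf r -> rect_wf s -> rects_meet r s ->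
  ~ rect_contains r s -> ~ rect_contains s r -> exists p, on_bd r p && on_bd s p.
Proof.
move=> wr ws rs nrs nsr.
have [xrs|/(xend_withinNlt rs)/andP[xlt _]] := boolP (xend_within r s).
  exact: boundaries_meet_of_xend.
have [xsr|/(xend_withinNlt (rects_meet_sym rs))/andP[xgt _]] := boolP (xend_within s r).
  have [p] := boundaries_meet_of_xend ws wr (rects_meet_sym rs) nrs xsr.
  by exists p; rewrite andbC.
by have := lt_trans xlt xgt; rewrite ltxx.
Qed.

Lemma on_bd_ends r p : on_bd r p -> (p.1 \in xends r) || (p.2 \in yends r).
Proof. by rewrite /on_bd !inE => /andP[_]; rewrite !orbA. Qed.

End RectangleBoundaries.

Lemma card_has_le (T : finType) (U : Type) (P : T -> pred U) (L : seq U) n :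
  (forall p, #|[pred i | P i p]| <= n) -> #|[pred i | has (P i) L]| <= n * size L.
Proof.
move=> Pn; elim: L => [|p L IH] /=; first by rewrite card0.
rewrite mulnS; apply: leq_trans (leq_add (Pn p) IH); rewrite -cardUI.
by apply: leq_trans (leq_addr _ _); apply: subset_leq_card; apply/subsetP => i; rewrite !inE.
Qed.

Section GeneralPosition.
Variables (R : realType) (I : finType) (F : I -> rect R).
Hypothesis gp : general_position F.

Lemma card_xends_le1 a : #|[pred i | a \in xends (F i)]| <= 1.
Proof.
apply/card_le1_eqP => i j ai aj; apply/eqP/contraT => ij.
by have /negP[] := (gp.2 j i ij).1 a a aj ai.
Qed.

Lemma card_yends_le1 b : #|[pred i | b \in yends (F i)]| <= 1.
Proof.
apply/card_le1_eqP => i j bi bj; apply/eqP/contraT => ij.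
by have /negP[] := (gp.2 j i ij).2 b b bj bi.
Qed.

Lemma card_on_bd_le2 p : #|[pred i | on_bd (F i) p]| <= 2.
Proof.
apply: leq_trans (leq_add (card_xends_le1 p.1) (card_yends_le1 p.2)); rewrite -cardUI.
by apply: leq_trans (leq_addr _ _); apply: subset_leq_card; apply/subsetP => i /on_bd_ends.
Qed.
End GeneralPosition.

Lemma count_lt_of_subpred (T : eqType) (a1 a2 : pred T) s x :
  subpred a1 a2 -> x \in s -> a2 x -> ~~ a1 x -> (count a1 s < count a2 s)%N.
Proof.
move=> a12 xs a2x a1x.
rewrite -[count a2 s]size_filter -(count_predC a1 (filter a2 s)) count_filter.
have -> : count (predI a1 a2) s = count a1 s.
  by apply: eq_count => y; apply/andb_idr/a12.
rewrite -[X in (X < _)%N]addn0 ltn_add2l -has_count.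
by apply/hasP; exists x; rewrite ?mem_filter ?a2x.
Qed.

Section JointChains.
Local Open Scope ring_scope.
Variables (R : realType) (I : finType) (F : I -> rect R).
Variables (T : finType) (te : rel T) (B : T -> seq (R * R)).
Hypothesis dec : is_tree_decomp (joint F) (arr_adj F) te B.

Definition bag_meets_bd i t := has (on_bd (F i)) (B t).

Definition bd_tree_edge i : rel T :=
  [rel a b | [&& te a b, bag_meets_bd i a & bag_meets_bd i b]].

Lemma bd_tree_edge_sym i : symmetric (bd_tree_edge i).
Proof.
case: dec => -[_ te_sym _ _ _] _ _ _ _ a b.
by rewrite /bd_tree_edge /= te_sym; congr (_ && _); exact: andbC.
Qed.

Lemma connect_bd_tree_edge_common i u s t :
  on_bd (F i) u -> u \in B s -> u \in B t -> connect (bd_tree_edge i) s t.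
Proof.
case: dec => _ _ _ _ dec_conn ui us ut; apply: connect_sub (dec_conn u s t us ut).
move=> a b /and3P[ab ua ub]; apply: connect1; rewrite /bd_tree_edge /bag_meets_bd /= ab.
by apply/and3P; split=> //; apply/hasP; exists u.
Qed.

Lemma connect_bd_tree_edge_adjacent i u v s t :
  on_bd (F i) u -> on_bd (F i) v -> bd_pos (F i) u <= bd_pos (F i) v ->
  (forall w, joint F w -> on_bd (F i) w ->
     ~ (bd_pos (F i) u < bd_pos (F i) w < bd_pos (F i) v)) ->
  u \in B s -> v \in B t -> connect (bd_tree_edge i) s t.
Proof.
case: dec => _ dec_joint _ dec_adj _ ui vi uv no_between us vt.
have [u_eq_v|u_neq_v] := eqVneq u v.
  by rewrite u_eq_v in us; exact: connect_bd_tree_edge_common vi us vt.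
have [r /andP[ur vr]] : exists r, (u \in B r) && (v \in B r).
  apply: dec_adj; split; [exact: dec_joint us | exact: dec_joint vt | by [] |].
  by exists i; split=> //; left; rewrite min_l ?max_r.
exact: connect_trans (connect_bd_tree_edge_common ui us ur)
                     (connect_bd_tree_edge_common vi vr vt).
Qed.

(* Every joint lies in some bag, so [points] is a finite list of all joints. *)
Let points := flatten (map B (enum T)).

Lemma pointsP w : reflect (exists t, w \in B t) (w \in points).
Proof.
apply: (iffP flattenP) => [[_ /mapP[t _ ->] wt] | [t wt]]; first by exists t.
by exists (B t); rewrite ?map_f ?mem_enum.
Qed.

Definition bd_between i u v w :=
  on_bd (F i) w && (bd_pos (F i) u < bd_pos (F i) w < bd_pos (F i) v).

Lemma connect_bd_tree_edge_le i u v s t :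
  on_bd (F i) u -> on_bd (F i) v -> bd_pos (F i) u <= bd_pos (F i) v ->
  u \in B s -> v \in B t -> connect (bd_tree_edge i) s t.
Proof.
(* Induction on the number of joints strictly between [u] and [v]; when there
   is none, [u] and [v] are adjacent in A_R. *)
have [n] := ubnP (count (bd_between i u v) points); elim: n => // n IH in u v s t *.
rewrite ltnS => n_ge ui vi uv us vt.
have [/hasP[w wpts uvw] | /hasPn no_between] := boolP (has (bd_between i u v) points); last first.
  apply: connect_bd_tree_edge_adjacent ui vi uv _ us vt => w wj wi uwv.
  case: dec => _ _ dec_cover _ _; have [r wr] := dec_cover w wj.
  by have /negP := no_between w (introT (pointsP w) (ex_intro _ r wr)); rewrite /bd_between wi uwv.
have [r wr] := pointsP _ wpts; case/and3P: (uvw) => wi uw wv.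
have count_lt a b : subpred (bd_between i a b) (bd_between i u v) ->
    ~~ bd_between i a b w -> (count (bd_between i a b) points < n)%N.
  by move=> sub nw; apply: leq_trans n_ge; apply: count_lt_of_subpred sub wpts uvw nw.
apply: (@connect_trans _ _ r).
  apply: (IH u w s r _ ui wi (ltW uw) us wr); apply: count_lt.
    by move=> x /and3P[xi ux /lt_trans/(_ wv) xv]; rewrite /bd_between xi ux xv.
  by rewrite /bd_between ltxx !andbF.
apply: (IH w v r t _ wi vi (ltW wv) wr vt); apply: count_lt.
  by move=> x /and3P[xi /(lt_trans uw) ux xv]; rewrite /bd_between xi ux xv.
by rewrite /bd_between ltxx andbF.
Qed.

Lemma connect_bd_tree_edge i u v s t :
  on_bd (F i) u -> on_bd (F i) v -> u \in B s -> v \in B t -> connect (bd_tree_edge i) s t.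
Proof.
move=> ui vi us vt; have [uv|/ltW vu] := lerP (bd_pos (F i) u) (bd_pos (F i) v).
  exact: connect_bd_tree_edge_le uv us vt.
by rewrite (sym_connect_sym (bd_tree_edge_sym i)); apply: connect_bd_tree_edge_le vu vt us.
Qed.
End JointChains.

Lemma homo_connect (T T' : finType) (e : rel T) (e' : rel T') (f : T -> T') x y :
  {homo f : a b / e a b >-> e' a b} -> connect e x y -> connect e' (f x) (f y).
Proof.
move=> fe /connectP[p ep ->]; apply/connectP; exists (map f p); last by rewrite last_map.
exact: homo_path ep.
Qed.

Section AddLeaves.
Variables (T I : finType) (te : rel T) (t0 : T).

Definition add_leaves : rel (T + I) := fun a b =>
  match a, b with
  | inl x, inl y => te x y
  | inl x, inr _ => x == t0
  | inr _, inl y => y == t0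
  | inr _, inr _ => false
  end.

Hypothesis te_tree : is_tree te.

Lemma add_leaves_sym : symmetric add_leaves.
Proof. by case: te_tree => _ te_sym _ _ _ [x|i] [y|j] //=; rewrite te_sym. Qed.

Lemma connect_add_leaves a b : connect add_leaves a b.
Proof.
case: te_tree => _ _ _ te_conn _.
have to_t0 c : connect add_leaves c (inl t0).
  case: c => [x|i]; first exact: homo_connect (te_conn x t0).
  by apply: connect1; rewrite /= eqxx.
by apply: connect_trans (to_t0 a) _; rewrite (sym_connect_sym add_leaves_sym).
Qed.

(* Both cycle-neighbours of a leaf would be [inl t0], contradicting [uniq]. *)
Lemma leaf_notin_cycle x p i : uniq (x :: p) -> (2 <= size p)%N ->
  cycle add_leaves (x :: p) -> inr i \notin x :: p.
Proof.
move=> xp_uniq xp_size xp_cycle; apply/negP => ixp.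
have := rot_index ixp; set q := drop _ _ ++ take _ _ => xp_rot.
have : cycle add_leaves (inr i :: q) by rewrite -xp_rot rot_cycle.
have : uniq (inr i :: q) by rewrite -xp_rot rot_uniq.
have : (2 <= size q)%N by have := congr1 size xp_rot; rewrite size_rot /= => -[<-].
case: q {xp_rot} => [|y [|z q]] //= _ /andP[_ /andP[yzq _]] /and3P[iy _].
rewrite rcons_path => /andP[_]; case: y iy yzq => [y|//] /= /eqP-> t0zq.
by case: (last z q) (mem_last z q) => [w|//] /[swap] /= /eqP->; rewrite (negPf t0zq).
Qed.

Lemma is_tree_add_leaves : is_tree add_leaves.
Proof.
have [[t _] _ te_irr _ te_acyc] := te_tree.
split=> [||[x|i]|a b|x p xp_uniq xp_size] //; first by exists (inl t).
- exact: add_leaves_sym.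
- by rewrite /= te_irr.
- exact: connect_add_leaves.
apply/negP => xp_cycle; pose g (a : T + I) := if a is inl y then y else t0.
have xpE : x :: p = map inl (map g (x :: p)).
  rewrite -map_comp map_id_in // => -[y|i] //= ixp.
  by have := leaf_notin_cycle i xp_uniq xp_size xp_cycle; rewrite ixp.
move: xp_uniq xp_cycle; rewrite xpE map_inj_uniq; last by move=> ? ? [].
rewrite cycle_map /= => gxp_uniq gxp_cycle.
by have := te_acyc _ _ gxp_uniq; rewrite size_map => /(_ xp_size)/negP; apply.
Qed.
End AddLeaves.

Section RectangleDecomposition.
Variables (R : realType) (I : finType) (F : I -> rect R).
Variables (T : finType) (te : rel T) (B : T -> seq (R * R)) (t0 : T).

Definition rect_bag (a : T + I) : seq I :=
  match a with
  | inl t => enum [pred i | bag_meets_bd F B i t]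
  | inr i => if [exists t, bag_meets_bd F B i t] then [::] else [:: i]
  end.

Lemma mem_rect_bag_inl t i : (i \in rect_bag (inl t)) = bag_meets_bd F B i t.
Proof. by rewrite /= mem_enum. Qed.

Lemma mem_rect_bag_inr j i :
  (i \in rect_bag (inr j)) = (i == j) && ~~ [exists t, bag_meets_bd F B i t].
Proof. by rewrite /=; case: eqP => [->|ij]; case: ifP; rewrite ?inE => // _; apply/eqP. Qed.

Hypothesis wf : forall i, rect_wf (F i).
Hypothesis corners : forall i j, i != j -> rects_meet (F i) (F j) -> corner_inter (F i) (F j).
Hypothesis dec : is_tree_decomp (joint F) (arr_adj F) te B.

Lemma rect_bag_decomp :
  is_tree_decomp (fun _ => True) (inter_adj F) (@add_leaves _ I te t0) rect_bag.
Proof.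
have [te_tree _ dec_cover _ _] := dec.
split=> [|//|i _|i j [ij ij_meet]|i [s|s] [t|t]]; first exact: is_tree_add_leaves.
- have [/existsP[t it]|no_t] := boolP [exists t, bag_meets_bd F B i t].
    by exists (inl t); rewrite mem_rect_bag_inl.
  by exists (inr i); rewrite mem_rect_bag_inr eqxx.
- have [_ nij nji _] := corners ij ij_meet.
  have [p /andP[ip jp]] := boundaries_meet (wf i) (wf j) ij_meet nij nji.
  have [t pt] : exists t, p \in B t by apply: dec_cover; exists i, j.
  by exists (inl t); rewrite !mem_rect_bag_inl; apply/andP; split; apply/hasP; exists p.
- rewrite !mem_rect_bag_inl => /hasP[u us ui] /hasP[v vt vi].
  apply: homo_connect (connect_bd_tree_edge dec ui vi us vt) => a b /and3P[ab ia ib].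
  by rewrite /= ab !mem_rect_bag_inl ia ib.
- by rewrite mem_rect_bag_inl mem_rect_bag_inr => si /andP[_ /existsPn/(_ s)]; rewrite si.
- by rewrite mem_rect_bag_inl mem_rect_bag_inr => /andP[_ /existsPn/(_ t)] /negP.
- by rewrite !mem_rect_bag_inr => /andP[/eqP<- _] /andP[/eqP<- _]; apply: connect0.
Qed.

Hypothesis gp : general_position F.

Lemma size_rect_bag k : (forall t, size (undup (B t)) <= k.+1) ->
  forall a, size (undup (rect_bag a)) <= (2 * k + 1).+1.
Proof.
move=> Bk [t|i] /=; last by case: ifP.
rewrite undup_id ?enum_uniq // -cardE.
have -> : #|[pred i | bag_meets_bd F B i t]| = #|[pred i | has (on_bd (F i)) (undup (B t))]|.
  by apply: eq_card => i; rewrite !inE; apply: eq_has_r => p; rewrite mem_undup.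
apply: leq_trans (card_has_le _ (card_on_bd_le2 gp)) _.
have -> : (2 * k + 1).+1 = 2 * k.+1 by rewrite mulnSr addn1 addn2.
by rewrite leq_mul2l Bk orbT.
Qed.
End RectangleDecomposition.

Theorem lemma6 (R : realType) (I : finType) (F : I -> rect R) :
  (forall i, rect_wf (F i)) ->
  general_position F ->
  (forall i j, i != j -> rects_meet (F i) (F j) -> corner_inter (F i) (F j)) ->
  forall k : nat,
    tw_le (joint F) (arr_adj F) k ->
    tw_le (fun _ : I => True) (inter_adj F) (2 * k + 1).
Proof.
move=> wf gp corners k [T [te [B [dec Bk]]]].
have [[[t0 _] _ _ _ _] _ _ _ _] := dec.
exists (T + I)%type, (@add_leaves _ I te t0), (rect_bag F B); split.
  exact: rect_bag_decomp.
exact: size_rect_bag.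
Qed.
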